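(* $\inf S = 1$, where $S$ is the set of $\beta>1$ with $S_\beta^+ = S_\beta^-$ (notation as in the context).
   Context: For $\beta>1$ let $f_\beta\colon[0,1]\to[0,1)$, $f_\beta(x)=\beta x \bmod 1$, and for $x\in[0,1]$ let $d(x,\beta)=(d_k(x,\beta))_{k\ge1}$ with $d_k(x,\beta)=\lfloor \beta f_\beta^{k-1}(x)\rfloor$. Let $S_\beta^+$ be the closure, in the product topology on $\{0,1,\dots,\lfloor\beta\rfloor\}^{\mathbb N}$, of $\{d(x,\beta): x\in[0,1)\}$. Let $S_\beta$ be the set of bi-infinite sequences $(\ldots,a_{-1},a_0,a_1,\ldots)$ such that $(a_n,a_{n+1},\ldots)\in S_\beta^+$ for every $n\in\mathbb Z$. Let $S_\beta^-$ be the set of one-sided sequences $(b_1,b_2,\ldots)$ such that the bi-infinite sequence $(\ldots,b_2,b_1,0,0,\ldots)$ (with $b_1$ at position $0$, $b_2$ at position $-1$, etc., and zeros at positions $1,2,\dots$) belongs to $S_\beta$; equivalently, there exists $(a_1,a_2,\ldots)\in S_\beta^+$ with $(\ldots,b_2,b_1,a_1,a_2,\ldots)\in S_\beta$. Define $S=\{\beta>1 : S_\beta^+=S_\beta^-\}$. *)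

From Stdlib Require Import Reals ZArith.
Open Scope R_scope.

(* floor of a real number (Int_part y = up y - 1 = floor y) *)
Definition rfloor (y : R) : Z := Int_part y.

Definition fbeta (beta x : R) : R := beta * x - IZR (rfloor (beta * x)).

Fixpoint fbeta_iter (beta : R) (n : nat) (x : R) : R :=
  match n with
  | O => x
  | S m => fbeta beta (fbeta_iter beta m x)
  end.

(* digit sequence d(x,beta), shifted to start at index 0:
   digit beta x k = d_{k+1}(x,beta) = floor(beta * f_beta^k(x)) *)
Definition digit (beta x : R) (k : nat) : nat :=
  Z.to_nat (rfloor (beta * fbeta_iter beta k x)).

(* S_beta^+ : closure of {d(x,beta) : x in [0,1)} in the product topology.
   A sequence lies in the closure iff every basic cylinder neighbourhood
   (fixing the first n coordinates) meets the set. *)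
Definition Splus (beta : R) (s : nat -> nat) : Prop :=
  forall n : nat, exists x : R, 0 <= x < 1 /\
    forall k : nat, (k < n)%nat -> digit beta x k = s k.

Definition Sbi (beta : R) (a : Z -> nat) : Prop :=
  forall n : Z, Splus beta (fun k : nat => a (n + Z.of_nat k)%Z).

(* the bi-infinite sequence (..., b_2, b_1, 0, 0, ...) with b_1 at position 0;
   b is indexed from 0, so b 0 = b_1 *)
Definition left_embed (b : nat -> nat) : Z -> nat :=
  fun z => if Z.leb z 0 then b (Z.to_nat (- z)) else O.

Definition Sminus (beta : R) (b : nat -> nat) : Prop :=
  Sbi beta (left_embed b).

Definition Sset (beta : R) : Prop :=
  1 < beta /\ (forall s : nat -> nat, Splus beta s <-> Sminus beta s).

Definition is_lower_bound (E : R -> Prop) (m : R) : Prop :=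
  forall x, E x -> m <= x.
Definition is_inf (E : R -> Prop) (m : R) : Prop :=
  is_lower_bound E m /\ (forall b, is_lower_bound E b -> b <= m).

From Stdlib Require Import Reals Lra Lia ZArith.
Open Scope R_scope.

(* Let [beta > 1] be the root of [beta ^ m * (beta - 1) = 1].  Then [S_beta^+] is
   the set of 0-1 sequences in which any two 1s are more than [m] places apart:
   after a digit 1 the remainder is below [beta - 1 = beta ^ (-m)], which forces [m]
   zero digits, and conversely every such finite word is the digit sequence of its
   own value [sum t_k beta ^ (-k-1)].  That condition is invariant under reversal,
   so [S_beta^- = S_beta^+] and [beta] lies in [S].  Bernoulli's inequality gives
   [m (beta - 1)^2 < 1], so these roots accumulate at 1. *)

Lemma rfloor_IZR_add (z : Z) (r : R) : 0 <= r < 1 -> rfloor (IZR z + r) = z.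
Proof. intros Hr; symmetry; apply Int_part_spec; lra. Qed.

Lemma fbeta_iter_add (beta : R) (i k : nat) (x : R) :
  fbeta_iter beta (i + k) x = fbeta_iter beta i (fbeta_iter beta k x).
Proof. induction i as [|i IH]; simpl; congruence. Qed.

Lemma digit_add (beta x : R) (i k : nat) :
  digit beta x (i + k) = digit beta (fbeta_iter beta k x) i.
Proof. unfold digit; now rewrite fbeta_iter_add. Qed.

Lemma digit_S (beta x : R) (k : nat) : digit beta x (S k) = digit beta (fbeta beta x) k.
Proof. now rewrite <- Nat.add_1_r, digit_add. Qed.

Lemma pow_mul_lt_1 (beta y : R) (p j : nat) :
  1 < beta -> 0 <= y -> y * beta ^ p < 1 -> (j <= p)%nat -> 0 <= beta ^ j * y < 1.
Proof.
  intros Hb Hy Hp Hj.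
  assert (beta ^ j <= beta ^ p) by (apply Rle_pow; lra || lia).
  assert (0 <= beta ^ j) by (apply pow_le; lra).
  split; nra.
Qed.

Lemma fbeta_iter_small (beta y : R) (p : nat) : 1 < beta -> 0 <= y -> y * beta ^ p < 1 ->
  forall j, (j <= p)%nat -> fbeta_iter beta j y = beta ^ j * y.
Proof.
  intros Hb Hy Hp j; induction j as [|j IH]; intros Hj; simpl; [ring|].
  rewrite IH by lia.
  unfold fbeta.
  replace (beta * (beta ^ j * y)) with (IZR 0 + beta ^ S j * y) by (simpl; ring).
  rewrite rfloor_IZR_add by (apply (pow_mul_lt_1 beta y p); assumption).
  simpl; ring.
Qed.

Lemma digit_small (beta y : R) (p : nat) : 1 < beta -> 0 <= y -> y * beta ^ p < 1 ->
  forall j, (j < p)%nat -> digit beta y j = 0%nat.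
Proof.
  intros Hb Hy Hp j Hj; unfold digit.
  rewrite (fbeta_iter_small beta y p) by (assumption || lia).
  replace (beta * (beta ^ j * y)) with (IZR 0 + beta ^ S j * y) by (simpl; ring).
  rewrite rfloor_IZR_add by (apply (pow_mul_lt_1 beta y p); assumption).
  reflexivity.
Qed.

Definition sparse (m : nat) (s : nat -> nat) : Prop :=
  (forall k, (s k <= 1)%nat) /\
  (forall i j, s i = 1%nat -> s j = 1%nat -> (i < j)%nat -> (m < j - i)%nat).

Lemma sparse_gap (m : nat) (s : nat -> nat) (k j : nat) :
  sparse m s -> s k = 1%nat -> (1 <= j <= m)%nat -> s (k + j)%nat = 0%nat.
Proof.
  intros [Hle Hfar] Hk Hj.
  specialize (Hle (k + j)%nat).
  destruct (Nat.eq_dec (s (k + j)%nat) 1) as [E|E]; [|lia].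
  specialize (Hfar k (k + j)%nat Hk E); lia.
Qed.

Lemma sparse_of_gaps (m : nat) (s : nat -> nat) :
  (forall k, (s k <= 1)%nat) ->
  (forall k j, s k = 1%nat -> (1 <= j <= m)%nat -> s (k + j)%nat = 0%nat) ->
  sparse m s.
Proof.
  intros Hle Hgap; split; [exact Hle|].
  intros i j Hi Hj Hij.
  destruct (Nat.lt_ge_cases m (j - i)) as [|Hclose]; [assumption|].
  replace j with (i + (j - i))%nat in Hj by lia.
  rewrite (Hgap i (j - i)%nat Hi ltac:(lia)) in Hj; discriminate.
Qed.

Definition shift (t : nat -> nat) : nat -> nat := fun k => t (S k).

Lemma sparse_shift (m : nat) (t : nat -> nat) : sparse m t -> sparse m (shift t).
Proof.
  intros [Hle Hfar]; split; unfold shift; [auto|].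
  intros i j Hi Hj Hij; specialize (Hfar _ _ Hi Hj ltac:(lia)); lia.
Qed.

(* [expansion beta t L = sum_(k < L) t k / beta ^ (k + 1)], in Horner form. *)
Fixpoint expansion (beta : R) (t : nat -> nat) (L : nat) : R :=
  match L with
  | O => 0
  | S L => (INR (t O) + expansion beta (shift t) L) / beta
  end.

Lemma expansion_nonneg (beta : R) (t : nat -> nat) (L : nat) :
  1 < beta -> 0 <= expansion beta t L.
Proof.
  intros Hb; revert t; induction L as [|L IH]; intros t; simpl; [lra|].
  pose proof (pos_INR (t O)); pose proof (IH (shift t)).
  unfold Rdiv; apply Rmult_le_pos; [lra|].
  left; apply Rinv_0_lt_compat; lra.
Qed.

Lemma left_embed_nonpos (b : nat -> nat) (z : Z) :
  (z <= 0)%Z -> left_embed b z = b (Z.to_nat (- z)).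
Proof. intros Hz; unfold left_embed; now rewrite (proj2 (Z.leb_le z 0) Hz). Qed.

Lemma left_embed_eq1 (b : nat -> nat) (z : Z) :
  left_embed b z = 1%nat -> (z <= 0)%Z /\ b (Z.to_nat (- z)) = 1%nat.
Proof. unfold left_embed; destruct (Z.leb_spec z 0); [auto | discriminate]. Qed.

Lemma left_embed_tails_sparse (m : nat) (b : nat -> nat) :
  (forall n : Z, sparse m (fun k => left_embed b (n + Z.of_nat k))) <-> sparse m b.
Proof.
  split.
  - intros Htails; split.
    + intros k; destruct (Htails (- Z.of_nat k)%Z) as [Hle _]; specialize (Hle O).
      rewrite left_embed_nonpos in Hle by lia.
      now replace (Z.to_nat (- (- Z.of_nat k + Z.of_nat 0))) with k in Hle by lia.
    + intros i j Hi Hj Hij.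
      destruct (Htails (- Z.of_nat j)%Z) as [_ Hfar].
      specialize (Hfar O (j - i)%nat).
      rewrite !left_embed_nonpos in Hfar by lia.
      replace (Z.to_nat (- (- Z.of_nat j + Z.of_nat 0))) with j in Hfar by lia.
      replace (Z.to_nat (- (- Z.of_nat j + Z.of_nat (j - i)))) with i in Hfar by lia.
      specialize (Hfar Hj Hi ltac:(lia)); lia.
  - intros [Hle Hfar] n; split.
    + intros k; unfold left_embed; destruct (Z.leb _ _); auto.
    + intros i j Hi Hj Hij.
      apply left_embed_eq1 in Hi as [Hi0 Hi]; apply left_embed_eq1 in Hj as [Hj0 Hj].
      specialize (Hfar _ _ Hj Hi ltac:(lia)); lia.
Qed.

Section SparseRoot.

Variables (beta : R) (m : nat).
Hypothesis beta_range : 1 < beta < 2.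
Hypothesis beta_root : beta ^ m * (beta - 1) = 1.

Lemma rfloor_beta_mul (y : R) : 0 <= y < 1 ->
  (rfloor (beta * y) = 0%Z /\ beta * y < 1) \/ (rfloor (beta * y) = 1%Z /\ 1 <= beta * y).
Proof.
  intros Hy; destruct (Rlt_le_dec (beta * y) 1) as [H|H]; [left|right]; split; auto.
  - replace (beta * y) with (IZR 0 + beta * y) by (simpl; ring).
    apply rfloor_IZR_add; split; nra.
  - replace (beta * y) with (IZR 1 + (beta * y - 1)) by (simpl; ring).
    apply rfloor_IZR_add; split; nra.
Qed.

Lemma fbeta_iter_range (x : R) (k : nat) : 0 <= x < 1 -> 0 <= fbeta_iter beta k x < 1.
Proof.
  intros Hx; induction k as [|k IH]; simpl; [assumption|]; unfold fbeta.
  destruct (rfloor_beta_mul _ IH) as [[-> ?]|[-> ?]]; simpl; nra.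
Qed.

Lemma digit_sparse (x : R) : 0 <= x < 1 -> sparse m (digit beta x).
Proof.
  intros Hx; apply sparse_of_gaps.
  - intros k; unfold digit.
    destruct (rfloor_beta_mul _ (fbeta_iter_range x k Hx)) as [[-> _]|[-> _]]; simpl; lia.
  - intros k j Hk Hj; unfold digit in Hk.
    pose proof (fbeta_iter_range x k Hx) as Hrange.
    destruct (rfloor_beta_mul _ Hrange) as [[E _]|[E Hge]]; rewrite E in Hk; [discriminate|].
    set (y := fbeta_iter beta (S k) x).
    assert (Hy : y = beta * fbeta_iter beta k x - 1) by (unfold y; simpl; unfold fbeta; now rewrite E).
    (* the remainder after a digit 1 is below [beta - 1 = beta ^ (-m)] *)
    assert (Hsmall : y * beta ^ m < 1) by (assert (0 < beta ^ m) by (apply pow_lt; lra); nra).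
    replace (k + j)%nat with ((j - 1) + S k)%nat by lia.
    rewrite digit_add; apply (digit_small beta y m); lra || lia.
Qed.

Lemma expansion_mul_pow_lt_1 (L : nat) : forall (t : nat -> nat) (p : nat),
  sparse m t -> (forall k, (k < p)%nat -> t k = 0%nat) -> expansion beta t L * beta ^ p < 1.
Proof.
  induction L as [|L IH]; intros t p Ht Hzero; simpl; [lra|].
  pose proof (expansion_nonneg beta (shift t) L ltac:(lra)).
  destruct p as [|p].
  - simpl; rewrite Rmult_1_r.
    assert (t O = 1%nat \/ t O = 0%nat) as [E|E] by (pose proof (proj1 Ht O); lia);
      rewrite E.
    + assert (Hgap : forall k, (k < m)%nat -> shift t k = 0%nat).
      { intros k Hk; unfold shift; apply (sparse_gap m t 0 (S k) Ht); [exact E | lia]. }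
      pose proof (IH (shift t) m (sparse_shift m t Ht) Hgap).
      assert (0 < beta ^ m) by (apply pow_lt; lra).
      apply (Rmult_lt_reg_r beta); [lra|]; unfold Rdiv.
      rewrite Rmult_assoc, Rinv_l, Rmult_1_r by lra; simpl; nra.
    + pose proof (IH (shift t) O (sparse_shift m t Ht) ltac:(intros; lia)) as Hlt.
      simpl in Hlt |- *; apply (Rmult_lt_reg_r beta); [lra|]; unfold Rdiv.
      rewrite Rmult_assoc, Rinv_l, Rmult_1_r by lra; lra.
  - rewrite (Hzero O) by lia.
    pose proof (IH (shift t) p (sparse_shift m t Ht)
      ltac:(intros k Hk; apply Hzero; lia)).
    replace ((INR 0 + expansion beta (shift t) L) / beta * beta ^ S p)
      with (expansion beta (shift t) L * beta ^ p) by (simpl; field; lra).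
    assumption.
Qed.

Lemma expansion_range (t : nat -> nat) (L : nat) :
  sparse m t -> 0 <= expansion beta t L < 1.
Proof.
  intros Ht; split; [apply expansion_nonneg; lra|].
  pose proof (expansion_mul_pow_lt_1 L t O Ht ltac:(intros; lia)); simpl in *; lra.
Qed.

Lemma expansion_first_digit (t : nat -> nat) (L : nat) : sparse m t ->
  rfloor (beta * expansion beta t (S L)) = Z.of_nat (t O) /\
  fbeta beta (expansion beta t (S L)) = expansion beta (shift t) L.
Proof.
  intros Ht.
  assert (E : beta * expansion beta t (S L) = IZR (Z.of_nat (t O)) + expansion beta (shift t) L).
  { simpl; rewrite <- INR_IZR_INZ; field; lra. }
  assert (F : rfloor (beta * expansion beta t (S L)) = Z.of_nat (t O)).
  { rewrite E; apply rfloor_IZR_add, expansion_range, sparse_shift, Ht. }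
  split; [exact F|]; unfold fbeta; rewrite F, E; ring.
Qed.

Lemma digit_expansion (k : nat) : forall (t : nat -> nat) (L : nat),
  sparse m t -> (k < L)%nat -> digit beta (expansion beta t L) k = t k.
Proof.
  induction k as [|k IH]; intros t L Ht Hk; destruct L as [|L]; try lia.
  - unfold digit; cbn [fbeta_iter].
    rewrite (proj1 (expansion_first_digit t L Ht)); apply Nat2Z.id.
  - rewrite digit_S, (proj2 (expansion_first_digit t L Ht)).
    apply IH; [apply sparse_shift, Ht | lia].
Qed.

Lemma Splus_sparse (s : nat -> nat) : Splus beta s <-> sparse m s.
Proof.
  split.
  - intros Hs; split.
    + intros k; destruct (Hs (S k)) as [x [Hx Hd]].
      rewrite <- (Hd k) by lia; apply (digit_sparse x Hx).
    + intros i j Hi Hj Hij; destruct (Hs (S j)) as [x [Hx Hd]].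
      rewrite <- Hd in Hi, Hj by lia; exact (proj2 (digit_sparse x Hx) i j Hi Hj Hij).
  - intros Hs n; exists (expansion beta s n); split.
    + now apply expansion_range.
    + intros k Hk; now apply digit_expansion.
Qed.

Lemma Sminus_sparse (b : nat -> nat) : Sminus beta b <-> sparse m b.
Proof.
  unfold Sminus, Sbi; rewrite <- left_embed_tails_sparse.
  now setoid_rewrite Splus_sparse.
Qed.

Lemma sparse_root_in_Sset : Sset beta.
Proof.
  split; [lra|]; intros s.
  now rewrite Splus_sparse, Sminus_sparse.
Qed.

End SparseRoot.

Lemma exists_sparse_root (m : nat) : (1 <= m)%nat ->
  exists beta, 1 < beta < 2 /\ beta ^ m * (beta - 1) = 1.
Proof.
  intros Hm.
  assert (H2m : 2 <= 2 ^ m) by (rewrite <- pow_1 at 1; apply Rle_pow; lra || lia).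
  destruct (IVT (fun x => x ^ m * (x - 1) - 1) 1 2) as [beta [Hbeta Hroot]];
    [reg | lra | rewrite pow1; lra | lra |].
  exists beta.
  assert (beta <> 1) by (intros ->; lra).
  assert (beta <> 2) by (intros ->; lra).
  split; lra.
Qed.

Lemma sparse_root_near_one (m : nat) (beta : R) :
  1 < beta -> beta ^ m * (beta - 1) = 1 -> INR m * (beta - 1) ^ 2 < 1.
Proof.
  intros Hb Hroot.
  pose proof (poly m (beta - 1) ltac:(lra)) as Hbern.
  replace (1 + (beta - 1)) with beta in Hbern by ring.
  nra.
Qed.

Theorem proposition3p2 : is_inf Sset 1.
Proof.
  split; [intros beta [Hb _]; lra|].
  intros b Hlow; destruct (Rle_lt_dec b 1) as [|Hb]; [assumption|exfalso].
  destruct (archimed_cor1 ((b - 1) ^ 2)) as [m [Hm Hm1]]; [nra|].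
  destruct (exists_sparse_root m Hm1) as [beta [Hbeta Hroot]].
  pose proof (Hlow beta (sparse_root_in_Sset beta m Hbeta Hroot)) as Hle.
  pose proof (sparse_root_near_one m beta ltac:(lra) Hroot) as Hnear.
  assert (Hmpos : 0 < INR m) by (apply lt_0_INR; lia).
  assert (1 < INR m * (b - 1) ^ 2).
  { apply (Rmult_lt_compat_l (INR m)) in Hm; [|assumption].
    rewrite Rinv_r in Hm by lra; exact Hm. }
  assert ((b - 1) ^ 2 <= (beta - 1) ^ 2) by (apply pow_incr; lra).
  nra.
Qed.
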